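(* For every context $\Theta$, if $\mathrm{fr}(\Theta)=\Omega$ then $\Omega\le\Theta$ in the substitution order, where $\Omega$ is regarded as a context consisting of atomic formulas.
   Context: Formulas are built from atoms ($p,q,\dots$) by a binary product: every formula is an atom or $A\bullet B$. A context is a finite (possibly empty) list of formulas; commas denote concatenation. The frontier $\mathrm{fr}$ is the ordered list of atom occurrences: $\mathrm{fr}(p)=p$, $\mathrm{fr}(A\bullet B)=\mathrm{fr}(A),\mathrm{fr}(B)$, and for a context the concatenation of the frontiers of its formulas. The sequent calculus has exactly four rules (no weakening, contraction or exchange): ($\bullet L$) from $A,B,\Delta\vdash C$ infer $A\bullet B,\Delta\vdash C$ (the product must be leftmost); ($\bullet R$) from $\Gamma\vdash A$ and $\Delta\vdash B$ infer $\Gamma,\Delta\vdash A\bullet B$; ($id$) $A\vdash A$; ($cut$) from $\Theta\vdash A$ and $\Gamma,A,\Delta\vdash B$ infer $\Gamma,\Theta,\Delta\vdash B$; derivable means conclusion of a finite derivation tree with no undischarged premises. The substitution order on contexts is the least relation $\le$ such that (1) $\Gamma\vdash A$ derivable implies $\Gamma\le A$ (one-element context); (2) $\cdot\le\cdot$ for the empty context; (3) $\Gamma_1\le\Gamma_2$ and $\Theta_1\le\Theta_2$ imply $(\Gamma_1,\Theta_1)\le(\Gamma_2,\Theta_2)$. *)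

From Stdlib Require Import List.
Import ListNotations.

Definition atom := nat.

Inductive formula : Type :=
| Atom : atom -> formula
| Prod : formula -> formula -> formula.

Definition context := list formula.

Fixpoint fr (A : formula) : list atom :=
  match A with
  | Atom p => [p]
  | Prod A B => fr A ++ fr B
  end.

Definition frc (G : context) : list atom := flat_map fr G.

Inductive derivable : context -> formula -> Prop :=
| d_prodL : forall A B D C,
    derivable (A :: B :: D) C -> derivable (Prod A B :: D) C
| d_prodR : forall G D A B,
    derivable G A -> derivable D B -> derivable (G ++ D) (Prod A B)
| d_id : forall A, derivable [A] A
| d_cut : forall Th A G D B,
    derivable Th A -> derivable (G ++ A :: D) B -> derivable (G ++ Th ++ D) B.

Inductive subst_le : context -> context -> Prop :=
| sl_der : forall G A, derivable G A -> subst_le G [A]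
| sl_nil : subst_le [] []
| sl_app : forall G1 G2 T1 T2,
    subst_le G1 G2 -> subst_le T1 T2 -> subst_le (G1 ++ T1) (G2 ++ T2).

Definition atoms_ctx (O : list atom) : context := map Atom O.

(* Every formula is derivable from the atoms of its frontier using only (id)
   and (•R); the substitution order then compares a context with the
   concatenated frontiers of its formulas formula by formula. *)
From Stdlib Require Import List.
Import ListNotations.

Lemma atoms_ctx_app (O1 O2 : list atom) :
  atoms_ctx (O1 ++ O2) = atoms_ctx O1 ++ atoms_ctx O2.
Proof. exact (map_app Atom O1 O2). Qed.

Lemma derivable_fr (A : formula) : derivable (atoms_ctx (fr A)) A.
Proof.
  induction A as [p | A IHA B IHB]; cbn [fr].
  - apply d_id.
  - rewrite atoms_ctx_app. now apply d_prodR.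
Qed.

Lemma subst_le_cons (G D : context) (A : formula) (T : context) :
  derivable G A -> subst_le D T -> subst_le (G ++ D) (A :: T).
Proof.
  intros HGA HDT.
  change (A :: T) with ([A] ++ T).
  apply sl_app; [apply sl_der |]; assumption.
Qed.

Theorem proposition2p11 :
  forall (Theta : context) (Omega : list atom),
    frc Theta = Omega -> subst_le (atoms_ctx Omega) Theta.
Proof.
  intros Theta Omega <-.
  induction Theta as [| A Theta IH].
  - exact sl_nil.
  - change (frc (A :: Theta)) with (fr A ++ frc Theta).
    rewrite atoms_ctx_app.
    apply subst_le_cons; [apply derivable_fr | exact IH].
Qed.
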